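(* (I-optimality bounds.) In the setting of the context, every $I$-optimal design $\mathbf d^*$ with $\boldsymbol\Sigma^*=\mathbf M(\mathbf d^* )^{-1}=(c^*_{jk})$ satisfies, for all $j,k\in\{1,\dots,m\}$, $$|c^*_{jk}|\le\alpha\big[(\mathbf F\mathbf F')^{-1}_{jj}(\mathbf F\mathbf F')^{-1}_{kk}\big]^{1/2},$$ and for $j\ne k$, $$|c^*_{jk}|\le\frac{\alpha}{2}\lambda_{\max}\big(\mathbf E_{jk}'(\mathbf F\mathbf F')^{-1}\mathbf E_{jk}\big),$$ where $\alpha=\mathrm{tr}(\mathbf F'\mathbf M(\mathbf d_0)^{-1}\mathbf F)$.
   Context: $\mathbf f_1,\dots,\mathbf f_n\in\mathbb R^m$ span $\mathbb R^m$, $2\le m\le N\le n$, and $\mathbf F=(\mathbf f_1,\dots,\mathbf f_n)$ ($m\times n$). A (binary) design is $\mathbf d\in\{0,1\}^n$ with $\sum_i d_i=N$, with information matrix $\mathbf M(\mathbf d)=\sum_i d_i\mathbf f_i\mathbf f_i'$. An $I$-optimal design minimizes $\sum_{i=1}^n\mathbf f_i'\mathbf M(\mathbf d)^{-1}\mathbf f_i=\mathrm{tr}(\mathbf F'\mathbf M(\mathbf d)^{-1}\mathbf F)$ over designs with nonsingular $\mathbf M(\mathbf d)$. $\mathbf d_0$ is a design with nonsingular $\mathbf M(\mathbf d_0)$. $\mathbf E_{jk}=(\mathbf e_j,\mathbf e_k)$ with $\mathbf e_j$ the $j$-th unit vector; $\mathbf A_{jj}$ is the $(j,j)$ entry; $\lambda_{\max}$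 the largest eigenvalue. *)

From HB Require Import structures.
From mathcomp Require Import all_boot all_order all_algebra.
Set Implicit Arguments. Unset Strict Implicit. Unset Printing Implicit Defensive.
Import Order.TTheory GRing.Theory Num.Theory.
Local Open Scope ring_scope.

Section Defs.
Variable R : rcfType.

(* A binary design with N runs among n candidate points. *)
Definition is_design (n N : nat) (d : 'I_n -> bool) : Prop :=
  (\sum_(i < n) (d i : nat))%N = N.

Definition info_mx (m n : nat) (F : 'M[R]_(m, n)) (d : 'I_n -> bool) : 'M[R]_m :=
  \sum_(i < n) (d i)%:R *: (col i F *m (col i F)^T).

Definition Icrit (m n : nat) (F : 'M[R]_(m, n)) (d : 'I_n -> bool) : R :=
  \tr (F^T *m invmx (info_mx F d) *m F).

Definition I_optimal (m n N : nat) (F : 'M[R]_(m, n)) (d : 'I_n -> bool) : Prop :=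
  [/\ is_design N d, info_mx F d \in unitmx &
      forall d' : 'I_n -> bool, is_design N d' -> info_mx F d' \in unitmx ->
        Icrit F d <= Icrit F d'].

Definition Ejk (m : nat) (j k : 'I_m) : 'M[R]_(m, 1 + 1) :=
  row_mx (delta_mx j ord0) (delta_mx k ord0).

Definition is_lambda_max (p : nat) (A : 'M[R]_p) (lam : R) : Prop :=
  eigenvalue A lam /\ (forall mu, eigenvalue A mu -> mu <= lam).
End Defs.

From HB Require Import structures.
From mathcomp Require Import all_boot all_order all_algebra.
From mathcomp Require Import ring lra.
Set Implicit Arguments. Unset Strict Implicit. Unset Printing Implicit Defensive.
Import Order.TTheory GRing.Theory Num.Theory.
Local Open Scope ring_scope.

(* Write f_i for the columns of F, Sigma = M(d_star)^-1 and G = (F F')^-1.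
   The heart of the proof is the comparison of quadratic forms
       v' Sigma v <= tr(F' Sigma F) * v' G v      for every vector v,
   obtained from v' Sigma v = sum_i (v' Sigma f_i)(f_i' G v) (as F F' G = 1)
   by Cauchy-Schwarz for sums and for the semidefinite form Sigma.  By
   I-optimality tr(F' Sigma F) <= alpha, hence Sigma <= alpha G as forms.
   The first bound follows from |c_jk|^2 <= c_jj c_kk.  For the second,
   test the comparison on v = e_j + s e_k (s the sign of c_jk): then
   4 |c_jk| = v' Sigma v - w' Sigma w <= v' Sigma v with w = e_j - s e_k,
   and v' G v <= 2 lambda_max(E_jk' G E_jk). *)

Section EntryBoundsDevelopment.
Variable R : rcfType.

(* Cauchy-Schwarz for sums with nonnegative weights, via Lagrange's identity
   sum_(i,j) c_i c_j (a_i b_j - a_j b_i)^2 = 2 (A B - (sum c a b)^2). *)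
Lemma weighted_cauchy_schwarz n (c a b : 'I_n -> R) : (forall i, 0 <= c i) ->
  (\sum_i c i * (a i * b i)) ^+ 2 <=
  (\sum_i c i * (a i * a i)) * (\sum_i c i * (b i * b i)).
Proof.
move=> c_ge0.
set A := \sum_i c i * (a i * a i); set B := \sum_i c i * (b i * b i).
have lagrange : \sum_i \sum_j c i * c j * (a i * b j - a j * b i) ^+ 2 =
    A * B + A * B - 2 * (\sum_i c i * (a i * b i)) ^+ 2.
  rewrite {2}[A * B]mulrC /A /B !mulr_suml expr2 !mulr_suml mulr_sumr.
  rewrite -big_split -sumrB /=; apply: eq_bigr => i _.
  rewrite !mulr_sumr -!big_split -sumrB /=; apply: eq_bigr => j _.
  ring.
have : 0 <= \sum_i \sum_j c i * c j * (a i * b j - a j * b i) ^+ 2.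
  apply/sumr_ge0 => i _; apply/sumr_ge0 => j _.
  by apply: mulr_ge0; [apply: mulr_ge0 | apply: sqr_ge0].
rewrite lagrange; lra.
Qed.

Lemma cauchy_schwarz n (a b : 'I_n -> R) :
  (\sum_i a i * b i) ^+ 2 <= (\sum_i a i ^+ 2) * (\sum_i b i ^+ 2).
Proof.
have := @weighted_cauchy_schwarz n (fun=> 1) a b (fun=> ler01).
by rewrite !(eq_bigr _ (fun i _ => mul1r _)) -!(eq_bigr _ (fun i _ => expr2 _)).
Qed.

Lemma le_of_sqr_le_mul (x y : R) : 0 <= x -> 0 <= y -> x ^+ 2 <= x * y -> x <= y.
Proof.
move=> x_ge0 y_ge0; have [-> //|x_neq0] := eqVneq x 0.
by rewrite expr2 ler_pM2l // lt_def x_neq0.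
Qed.

Definition bform m (A : 'M[R]_m) (x y : 'cV[R]_m) : R := (x^T *m A *m y) 0 0.

Lemma bform_delta m (A : 'M[R]_m) j k :
  bform A (delta_mx j 0) (delta_mx k 0) = A j k.
Proof. by rewrite /bform trmx_delta -rowE -colE !mxE. Qed.

Lemma bform_delta_comb m (A : 'M[R]_m) j k t :
  let v := delta_mx j 0 + t *: delta_mx k 0 in
  bform A v v = A j j + t * A j k + t * A k j + t ^+ 2 * A k k.
Proof.
move=> v; rewrite /bform.
have -> : v^T = (delta_mx j 0)^T + t *: (delta_mx k 0)^T.
  by apply/matrixP => a b; rewrite !mxE.
rewrite /v !mulmxDl !mulmxDr -!scalemxAl -!scalemxAr !trmx_delta -!rowE -!colE.
by rewrite !mxE; ring.
Qed.

Lemma mulmx_tr_entry m p q (X : 'M[R]_(m, p)) (A : 'M[R]_m) (Y : 'M[R]_(m, q)) a b :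
  (X^T *m A *m Y) a b = bform A (col a X) (col b Y).
Proof.
rewrite /bform !mxE; apply: eq_bigr => r _; rewrite !mxE; congr (_ * _).
by apply: eq_bigr => s _; rewrite !mxE.
Qed.

Lemma dotC m (u w : 'cV[R]_m) : (u^T *m w) 0 0 = (w^T *m u) 0 0.
Proof. by rewrite -[w^T *m u]trmxK trmx_mul trmxK [RHS]mxE. Qed.

(* A Gram-type matrix sum_i c_i g_i g_i', as occurs both for M(d) and F F'. *)
Section GramMatrix.
Variables (m n : nat) (c : 'I_n -> R) (g : 'I_n -> 'cV[R]_m).

Definition gram : 'M[R]_m := \sum_i c i *: (g i *m (g i)^T).

Lemma gram_bilinear (P : 'rV[R]_m) (Q : 'cV[R]_m) :
  (P *m gram *m Q) 0 0 = \sum_i c i * ((P *m g i) 0 0 * ((g i)^T *m Q) 0 0).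
Proof.
rewrite mulmx_sumr mulmx_suml summxE; apply: eq_bigr => i _.
rewrite -scalemxAr -scalemxAl mxE; congr (_ * _).
by rewrite mulmxA -(mulmxA (P *m g i)) [LHS]mxE big_ord1.
Qed.

Lemma gram_sym : gram^T = gram.
Proof.
by rewrite linear_sum; apply: eq_bigr => i _; rewrite linearZ /= trmx_mul trmxK.
Qed.

Lemma inv_gram_sym : (invmx gram)^T = invmx gram.
Proof. by rewrite trmx_inv gram_sym. Qed.

Hypothesis gram_unit : gram \in unitmx.

(* The form of gram^-1 is itself a Gram-type form:
   x' S y = (S x)' gram (S y) = sum_i c_i (g_i' S x)(g_i' S y). *)
Lemma bform_inv_gram x y : bform (invmx gram) x y =
  \sum_i c i * (bform (invmx gram) (g i) x * bform (invmx gram) (g i) y).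
Proof.
set S := invmx gram.
have -> : bform S x y = ((S *m x)^T *m gram *m (S *m y)) 0 0.
  by rewrite trmx_mul inv_gram_sym !mulmxA -(mulmxA _ S gram) mulVmx // mulmx1.
rewrite gram_bilinear; apply: eq_bigr => i _.
by rewrite /bform -!mulmxA [in RHS]dotC.
Qed.

Hypothesis c_ge0 : forall i, 0 <= c i.

Lemma bform_inv_gram_ge0 x : 0 <= bform (invmx gram) x x.
Proof.
rewrite bform_inv_gram; apply/sumr_ge0 => i _.
by rewrite mulr_ge0 // -expr2 sqr_ge0.
Qed.

Lemma bform_inv_gram_CS x y :
  bform (invmx gram) x y ^+ 2 <=
  bform (invmx gram) x x * bform (invmx gram) y y.
Proof. by rewrite !bform_inv_gram; apply: weighted_cauchy_schwarz. Qed.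

End GramMatrix.

Lemma info_mxE m n (F : 'M[R]_(m, n)) (d : 'I_n -> bool) :
  info_mx F d = gram (fun i => (d i)%:R) (fun i => col i F).
Proof. by []. Qed.

Lemma mulmx_trT_gram m n (F : 'M[R]_(m, n)) :
  F *m F^T = gram (fun=> 1) (fun i => col i F).
Proof.
apply/matrixP => a b; rewrite !mxE summxE; apply: eq_bigr => i _.
by rewrite scale1r !mxE big_ord1 !mxE.
Qed.

Lemma row_norm_eq0 n (y : 'rV[R]_n) : y *m y^T = 0 -> y = 0.
Proof.
move=> /(congr1 (fun A : 'M_1 => A 0 0)); rewrite !mxE => sum_sq0.
have sq_ge0 (j : 'I_n) : true -> 0 <= y 0 j * y^T j 0.
  by move=> _; rewrite mxE -expr2 sqr_ge0.
apply/matrixP => i j; rewrite (ord1 i) [RHS]mxE.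
have /eqP := @psumr_eq0P _ _ _ _ sq_ge0 sum_sq0 j isT.
by rewrite mxE mulf_eq0 orbb => /eqP.
Qed.

Lemma mulmx_trT_unit m n (F : 'M[R]_(m, n)) : \rank F = m -> F *m F^T \in unitmx.
Proof.
move=> rkF; rewrite -row_free_unit -kermx_eq0.
apply: contraT => /rowV0Pn [x /sub_kermxP xFFT0 x_neq0].
have xF0 : x *m F = 0.
  by apply: row_norm_eq0; rewrite trmx_mul !mulmxA -(mulmxA x) xFFT0 mul0mx.
by move/eqP: xF0; rewrite mulmx_free_eq0 ?(negPf x_neq0) // /row_free rkF.
Qed.

Section InformationComparison.
Variables (m n : nat) (F : 'M[R]_(m, n)) (d : 'I_n -> bool).
Hypotheses (FFT_unit : F *m F^T \in unitmx) (M_unit : info_mx F d \in unitmx).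
Local Notation Sigma := (invmx (info_mx F d)).
Local Notation G := (invmx (F *m F^T)).

Lemma bform_inv_info_ge0 x : 0 <= bform Sigma x x.
Proof. by rewrite info_mxE bform_inv_gram_ge0 // => i; apply: ler0n. Qed.

Lemma bform_inv_info_CS x y :
  bform Sigma x y ^+ 2 <= bform Sigma x x * bform Sigma y y.
Proof. by rewrite info_mxE bform_inv_gram_CS // => i; apply: ler0n. Qed.

Lemma bform_G_sum v : bform G v v = \sum_i bform G (col i F) v ^+ 2.
Proof.
rewrite [in LHS]mulmx_trT_gram bform_inv_gram -?mulmx_trT_gram //.
by apply: eq_bigr => i _; rewrite mul1r expr2.
Qed.

Lemma bform_G_ge0 v : 0 <= bform G v v.
Proof. by rewrite bform_G_sum sumr_ge0 // => i _; apply: sqr_ge0. Qed.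

Lemma Icrit_sum : Icrit F d = \sum_i bform Sigma (col i F) (col i F).
Proof. by apply: eq_bigr => i _; rewrite mulmx_tr_entry. Qed.

Lemma Icrit_ge0 : 0 <= Icrit F d.
Proof. by rewrite Icrit_sum sumr_ge0 // => i _; apply: bform_inv_info_ge0. Qed.

(* v' Sigma v = sum_i (v' Sigma f_i)(f_i' G v), because F F' G = 1. *)
Lemma bform_inv_info_split v :
  bform Sigma v v = \sum_i bform Sigma v (col i F) * bform G (col i F) v.
Proof.
have -> : bform Sigma v v = ((v^T *m Sigma) *m (F *m F^T) *m (G *m v)) 0 0.
  by rewrite -mulmxA (mulmxA (F *m F^T)) mulmxV // mul1mx.
rewrite mulmx_trT_gram gram_bilinear; apply: eq_bigr => i _.
by rewrite mul1r /bform !mulmxA.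
Qed.

(* (v' Sigma v)^2 <= (sum_i (v' Sigma f_i)^2) (sum_i (f_i' G v)^2)
                  <= (v' Sigma v * tr(F' Sigma F)) * v' G v; divide by v' Sigma v. *)
Lemma bform_inv_info_le v : bform Sigma v v <= Icrit F d * bform G v v.
Proof.
apply: le_of_sqr_le_mul.
- exact: bform_inv_info_ge0.
- by rewrite mulr_ge0 ?Icrit_ge0 ?bform_G_ge0.
have sum_le : \sum_i bform Sigma v (col i F) ^+ 2 <= bform Sigma v v * Icrit F d.
  rewrite Icrit_sum mulr_sumr; apply: ler_sum => i _; exact: bform_inv_info_CS.
rewrite mulrA; apply: le_trans (ler_wpM2r (bform_G_ge0 v) sum_le).
by rewrite bform_inv_info_split bform_G_sum; apply: cauchy_schwarz.
Qed.

End InformationComparison.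

Local Notation i1 := (lift ord0 ord0 : 'I_2).

Lemma ord2P (a : 'I_2) : a = ord0 \/ a = i1.
Proof. by case: a => [[|[|k]]] a_lt; [left | right | ]; try apply: val_inj. Qed.

Lemma det_mx22 (M : 'M[R]_2) : \det M = M 0 0 * M i1 i1 - M 0 i1 * M i1 0.
Proof.
rewrite (expand_det_row _ ord0) !big_ord_recl big_ord0 /cofactor !det_mx11 !mxE /=.
have -> : lift i1 (0 : 'I_1) = ord0 by apply: val_inj.
have -> : lift ord0 (0 : 'I_1) = i1 by apply: val_inj.
by rewrite add0n expr0 expr1; ring.
Qed.

Lemma eigenvalue_det n (A : 'M[R]_n) mu : eigenvalue A mu = (\det (mu%:M - A) == 0).
Proof.
apply/eigenvalueP/det0P => [[v Av v_neq0] | [v v_neq0 Av]]; exists v => //.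
  by rewrite mulmxBr Av mul_mx_scalar subrr.
by apply/eqP; rewrite -mul_mx_scalar eq_sym -subr_eq0 -mulmxBr Av.
Qed.

Lemma eigenvalue2 (B : 'M[R]_2) mu :
  eigenvalue B mu = ((mu - B 0 0) * (mu - B i1 i1) == B 0 i1 * B i1 0).
Proof. by rewrite eigenvalue_det det_mx22 !mxE /= !mulr1n !mulr0n subr_eq0 !sub0r mulrNN. Qed.

(* Both
   lam and a + c - lam solve the characteristic equation, so lam is the larger
   root; then (lam - a) + (lam - c) >= 0 and its square dominates 4 b^2. *)
Lemma lambda_max2_bound (B : 'M[R]_2) lam s :
  B 0 i1 = B i1 0 -> is_lambda_max B lam -> s ^+ 2 = 1 ->
  B 0 0 + s * (B 0 i1 + B i1 0) + B i1 i1 <= 2 * lam.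
Proof.
set a := B 0 0; set b := B 0 i1; set c := B i1 i1 => b_sym [lam_eig lam_max] s2.
rewrite -b_sym.
have char_lam : (lam - a) * (lam - c) = b * b.
  by move: lam_eig; rewrite eigenvalue2 -/a -/b -/c -b_sym => /eqP.
have other_le : a + c - lam <= lam.
  apply: lam_max; rewrite eigenvalue2 -/a -/b -/c -b_sym; apply/eqP.
  by rewrite -char_lam; ring.
have sb_sq : (2 * (s * b)) ^+ 2 = 4 * ((lam - a) * (lam - c)).
  by rewrite char_lam !exprMn s2; ring.
have : (2 * (s * b)) ^+ 2 <= (lam - a + (lam - c)) ^+ 2.
  by rewrite sb_sq -subr_ge0 (_ : _ - _ = (a - c) ^+ 2) ?sqr_ge0 //; ring.
rewrite -ler_sqrt ?sqr_ge0 // !sqrtr_sqr => /(le_trans (ler_norm _)).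
by rewrite ger0_norm; lra.
Qed.

Lemma col_Ejk m (j k : 'I_m) (a : 'I_2) :
  col a (Ejk R j k) = delta_mx (if a == ord0 then j else k) 0.
Proof.
apply/matrixP => p q; rewrite (ord1 q) [LHS]mxE /Ejk.
case: (ord2P a) => ->; rewrite /=.
  have -> : ord0 = lshift 1 ord0 :> 'I_(1 + 1) by apply: val_inj.
  exact: row_mxEl.
have -> : i1 = rshift 1 ord0 :> 'I_(1 + 1) by apply: val_inj.
exact: row_mxEr.
Qed.

Lemma Ejk_form_entry m (A : 'M[R]_m) (j k : 'I_m) (a b : 'I_2) :
  ((Ejk R j k)^T *m A *m Ejk R j k) a b =
  A (if a == ord0 then j else k) (if b == ord0 then j else k).
Proof. by rewrite mulmx_tr_entry !col_Ejk bform_delta. Qed.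

Section EntryBounds.
Variables (m : nat) (S G : 'M[R]_m) (a : R).
Hypotheses (S_sym : S^T = S) (G_sym : G^T = G) (a_ge0 : 0 <= a).
Hypotheses (S_ge0 : forall x, 0 <= bform S x x) (G_ge0 : forall x, 0 <= bform G x x).
Hypothesis S_CS : forall x y, bform S x y ^+ 2 <= bform S x x * bform S y y.
Hypothesis S_le_G : forall x, bform S x x <= a * bform G x x.

(* |S_jk|^2 <= S_jj S_kk <= a^2 G_jj G_kk. *)
Lemma entry_bound_sqrt j k : `|S j k| <= a * Num.sqrt (G j j * G k k).
Proof.
have diag i : [/\ 0 <= S i i, S i i <= a * G i i & 0 <= G i i].
  have := G_ge0 (delta_mx i 0); have := S_le_G (delta_mx i 0).
  by have := S_ge0 (delta_mx i 0); rewrite !bform_delta.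
have [Sj_ge0 Sj_le Gj_ge0] := diag j; have [Sk_ge0 Sk_le Gk_ge0] := diag k.
rewrite -ler_sqr ?nnegrE ?mulr_ge0 ?sqrtr_ge0 //.
rewrite real_normK ?num_real // exprMn sqr_sqrtr ?mulr_ge0 //.
have := S_CS (delta_mx j 0) (delta_mx k 0); rewrite !bform_delta => /le_trans; apply.
rewrite (_ : _ * (_ * _) = (a * G j j) * (a * G k k)); last by ring.
exact: ler_pM.
Qed.

(* Testing Sigma <= a G on e_j + s e_k, with s the sign of S j k. *)
Lemma entry_bound_lambda j k lam :
  is_lambda_max ((Ejk R j k)^T *m G *m Ejk R j k) lam -> `|S j k| <= a / 2%:R * lam.
Proof.
move=> lam_max; set s : R := (-1) ^+ (S j k < 0)%R.
have s2 : s ^+ 2 = 1 by apply: sqrr_sign.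
have sS : s * S j k = `|S j k| by rewrite normrEsign.
have symS : S k j = S j k by rewrite -{1}S_sym mxE.
have symG : G k j = G j k by rewrite -{1}G_sym mxE.
have upper := S_le_G (delta_mx j 0 + s *: delta_mx k 0).
have lower := S_ge0 (delta_mx j 0 + (- s) *: delta_mx k 0).
rewrite !bform_delta_comb sqrrN s2 symS symG in upper lower.
have := lambda_max2_bound _ lam_max s2.
rewrite !Ejk_form_entry /= symG => /(_ erefl) G_le.
have : a * (G j j + s * G j k + s * G j k + G k k) <= a * (2 * lam).
  by apply: ler_wpM2l => //; lra.
rewrite -sS; lra.
Qed.

End EntryBounds.

End EntryBoundsDevelopment.

Theorem mainTheorem10 (R : rcfType) (m n N : nat) (F : 'M[R]_(m, n))
    (d0 dstar : 'I_n -> bool) :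
  (2 <= m)%N -> (m <= N)%N -> (N <= n)%N ->
  \rank F = m ->
  is_design N d0 -> info_mx F d0 \in unitmx ->
  I_optimal N F dstar ->
  let alpha := Icrit F d0 in
  let Sigma := invmx (info_mx F dstar) in
  let G := invmx (F *m F^T) in
  (forall j k : 'I_m, `|Sigma j k| <= alpha * Num.sqrt (G j j * G k k)) /\
  (forall j k : 'I_m, j != k -> forall lam : R,
      is_lambda_max ((Ejk R j k)^T *m G *m Ejk R j k) lam ->
      `|Sigma j k| <= alpha / 2%:R * lam).
Proof.
move=> _ _ _ rkF d0_design d0_unit [_ dstar_unit dstar_opt] alpha Sigma G.
have FFT_unit := mulmx_trT_unit rkF.
have Icrit_le : Icrit F dstar <= alpha := dstar_opt d0 d0_design d0_unit.
have Sigma_sym : Sigma^T = Sigma by rewrite /Sigma info_mxE inv_gram_sym.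
have G_sym : G^T = G by rewrite /G mulmx_trT_gram inv_gram_sym.
have alpha_ge0 : 0 <= alpha := le_trans (Icrit_ge0 dstar_unit) Icrit_le.
have Sigma_le x : bform Sigma x x <= alpha * bform G x x.
  apply: le_trans (bform_inv_info_le FFT_unit dstar_unit x) _.
  by apply: ler_wpM2r => //; apply: bform_G_ge0.
have Sigma_ge0 := bform_inv_info_ge0 dstar_unit.
have G_ge0 := bform_G_ge0 FFT_unit.
have Sigma_CS := bform_inv_info_CS dstar_unit.
split => [j k | j k _ lam].
  exact: entry_bound_sqrt alpha_ge0 Sigma_ge0 G_ge0 Sigma_CS Sigma_le j k.
exact: entry_bound_lambda Sigma_sym G_sym alpha_ge0 Sigma_ge0 Sigma_le j k lam.
Qed.
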